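(* Let $S_1=(x_1,y_1),\ldots,S_4=(x_4,y_4)$ be four points in the plane with $x_1\le x_2\le x_3\le x_4$, and let $\delta_1,\ldots,\delta_4$ be positive integers. For $i\in\{1,\dots,4\}$ define the pivot point $$P_i=\left(x_i+\frac{\sum_{j=1}^4\delta_j(x_j-x_i)^2}{\sum_{j=1}^4\delta_j(x_j-x_i)},\ y_i+\frac{\sum_{j=1}^4\delta_j(x_j-x_i)(y_j-y_i)}{\sum_{j=1}^4\delta_j(x_j-x_i)}\right)$$ whenever the denominator is nonzero. Fix $i$ such that $P_i$ is defined and the three points $S_a,S_b,S_c$ ($a<b<c$, $\{a,b,c\}=\{1,2,3,4\}\setminus\{i\}$) are not collinear, and let $(\lambda_a,\lambda_b,\lambda_c)$ be the barycentric coordinates of $P_i$ with respect to the triangle $S_aS_bS_c$. Then the sign pattern of $(\lambda_a,\lambda_b,\lambda_c)$ is neither $+-+$ (i.e. $\lambda_a>0,\lambda_b<0,\lambda_c>0$) nor $-+-$ (i.e. $\lambda_a<0,\lambda_b>0,\lambda_c<0$).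
   Context: The pivot point $P_i$ is the point through which the least-squares regression line of the data, in which each $S_j$ appears $\delta_j$ times, always passes regardless of how many additional copies of $S_i$ are added. For a non-degenerate triangle $ABC$, the barycentric coordinates of $Q$ are the unique reals $(\lambda_A,\lambda_B,\lambda_C)$ with sum $1$ and $Q=\lambda_AA+\lambda_BB+\lambda_CC$; their sign pattern determines which of the seven regions cut out by the edge-lines of the triangle contains $Q$. *)

From mathcomp Require Import all_boot all_order all_algebra.
Set Implicit Arguments. Unset Strict Implicit. Unset Printing Implicit Defensive.
Import Order.TTheory GRing.Theory Num.Theory.
Local Open Scope ring_scope.

(* Points S_j = (x j, y j), j : 'I_4 (index j represents S_{j+1}). *)

Section Pivot.
Variable R : realFieldType.

Definition pivot_den (x : 'I_4 -> R) (delta : 'I_4 -> nat) (i : 'I_4) : R :=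
  \sum_(j < 4) (delta j)%:R * (x j - x i).

Definition pivot_x (x : 'I_4 -> R) (delta : 'I_4 -> nat) (i : 'I_4) : R :=
  x i + (\sum_(j < 4) (delta j)%:R * (x j - x i) ^+ 2) / pivot_den x delta i.

Definition pivot_y (x y : 'I_4 -> R) (delta : 'I_4 -> nat) (i : 'I_4) : R :=
  y i + (\sum_(j < 4) (delta j)%:R * ((x j - x i) * (y j - y i)))
        / pivot_den x delta i.

Definition collinear (ax ay bx by_ cx cy : R) : Prop :=
  (bx - ax) * (cy - ay) - (by_ - ay) * (cx - ax) = 0.

Definition is_barycentric (ax ay bx by_ cx cy qx qy la lb lc : R) : Prop :=
  [/\ la + lb + lc = 1,
      qx = la * ax + lb * bx + lc * cx &
      qy = la * ay + lb * by_ + lc * cy].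

End Pivot.

From mathcomp Require Import all_boot all_order all_algebra.
From mathcomp Require Import ring.
Set Implicit Arguments. Unset Strict Implicit. Unset Printing Implicit Defensive.
Import Order.TTheory GRing.Theory Num.Theory.
Local Open Scope ring_scope.

(* Writing D for the denominator, P_i = sum_j w_j S_j with weights
   w_j = delta_j (x_j - x_i) / D summing to 1, and w_i = 0.  So (w_a, w_b, w_c)
   are the barycentric coordinates of P_i, and D w_j has the sign of x_j - x_i,
   which is monotone in j because the abscissae are sorted.  A sign pattern
   + - + or - + - would make that sign change twice. *)

Lemma big_uniq_full (R : Type) (idx : R) (op : Monoid.com_law idx)
    (T : finType) (s : seq T) (F : T -> R) :
  uniq s -> size s = #|T| -> \big[op/idx]_(t <- s) F t = \big[op/idx]_t F t.
Proof.
move=> s_uniq s_size; rewrite big_uniq //; apply: eq_bigl.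
apply/subset_cardP; last exact: subset_predT.
by rewrite (card_uniqP s_uniq).
Qed.

Lemma det2_kernel (R : idomainType) (p q r s u v : R) :
  p * s - r * q != 0 -> p * u + q * v = 0 -> r * u + s * v = 0 -> u = 0 /\ v = 0.
Proof.
move=> /negPf det_neq0 eq1 eq2.
have /eqP : (p * s - r * q) * u = 0.
  transitivity (s * (p * u + q * v) - q * (r * u + s * v)); first by ring.
  by rewrite eq1 eq2 !mulr0 subrr.
have /eqP : (p * s - r * q) * v = 0.
  transitivity (p * (r * u + s * v) - r * (p * u + q * v)); first by ring.
  by rewrite eq1 eq2 !mulr0 subrr.
by rewrite !mulf_eq0 det_neq0 /= => /eqP -> /eqP ->.
Qed.

Lemma is_barycentric_uniq (R : realFieldType)
    (ax ay bx by_ cx cy qx qy la lb lc ma mb mc : R) :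
  ~ collinear ax ay bx by_ cx cy ->
  is_barycentric ax ay bx by_ cx cy qx qy la lb lc ->
  is_barycentric ax ay bx by_ cx cy qx qy ma mb mc ->
  [/\ la = ma, lb = mb & lc = mc].
Proof.
move=> /eqP ncol [sl xl yl] [sm xm ym].
have ex : (bx - ax) * (lb - mb) + (cx - ax) * (lc - mc) = 0.
  have -> : (bx - ax) * (lb - mb) + (cx - ax) * (lc - mc) =
      (la * ax + lb * bx + lc * cx) - (ma * ax + mb * bx + mc * cx)
      - ax * ((la + lb + lc) - (ma + mb + mc)) by ring.
  by rewrite -xl -xm sl sm !subrr mulr0 subrr.
have ey : (by_ - ay) * (lb - mb) + (cy - ay) * (lc - mc) = 0.
  have -> : (by_ - ay) * (lb - mb) + (cy - ay) * (lc - mc) =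
      (la * ay + lb * by_ + lc * cy) - (ma * ay + mb * by_ + mc * cy)
      - ay * ((la + lb + lc) - (ma + mb + mc)) by ring.
  by rewrite -yl -ym sl sm !subrr mulr0 subrr.
have [/eqP + /eqP] := det2_kernel ncol ex ey; rewrite !subr_eq0 => /eqP eb /eqP ec.
by split=> //; apply: (addIr (lb + lc)); rewrite !addrA sl eb ec sm.
Qed.

Lemma no_sign_alternation (R : realDomainType) (D la lb lc : R) :
  D != 0 -> (0 < D * la -> 0 < D * lb) -> (D * lc < 0 -> D * lb < 0) ->
  ~ (0 < la /\ lb < 0 /\ 0 < lc) /\ ~ (la < 0 /\ 0 < lb /\ lc < 0).
Proof.
rewrite neq_lt => /orP[D_lt0 | D_gt0] up down.
- rewrite !nmulr_rgt0 // !nmulr_rlt0 // in up down.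
  split=> [[_ [lb_lt0 /down lb_gt0]] | [/up lb_lt0 [lb_gt0 _]]];
    by have := lt_trans lb_lt0 lb_gt0; rewrite ltxx.
- rewrite !pmulr_rgt0 // !pmulr_rlt0 // in up down.
  split=> [[/up lb_gt0 [lb_lt0 _]] | [_ [lb_gt0 /down lb_lt0]]];
    by have := lt_trans lb_lt0 lb_gt0; rewrite ltxx.
Qed.

Section PivotWeights.
Variables (R : realFieldType) (x : 'I_4 -> R) (delta : 'I_4 -> nat) (i : 'I_4).
Hypothesis den_neq0 : pivot_den x delta i != 0.

Definition pivot_weight (j : 'I_4) : R :=
  (delta j)%:R * (x j - x i) / pivot_den x delta i.

Lemma pivot_weight_self : pivot_weight i = 0.
Proof. by rewrite /pivot_weight subrr mulr0 mul0r. Qed.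

Lemma sum_pivot_weight : \sum_j pivot_weight j = 1.
Proof. by rewrite /pivot_weight -mulr_suml divff. Qed.

Lemma pivot_y_affine (y : 'I_4 -> R) :
  pivot_y x y delta i = \sum_j pivot_weight j * y j.
Proof.
have -> : \sum_j pivot_weight j * y j =
    \sum_j (pivot_weight j * y i + pivot_weight j * (y j - y i)).
  by apply: eq_bigr => j _; ring.
rewrite big_split /= -mulr_suml sum_pivot_weight mul1r /pivot_y mulr_suml.
by congr (_ + _); apply: eq_bigr => j _; rewrite /pivot_weight; ring.
Qed.

Lemma pivot_x_affine : pivot_x x delta i = \sum_j pivot_weight j * x j.
Proof.
rewrite -pivot_y_affine /pivot_x /pivot_y.
by congr (_ + _ / _); apply: eq_bigr => j _; rewrite expr2.
Qed.

Lemma den_pivot_weight_gt0 (j : 'I_4) :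
  (0 < delta j)%N -> (0 < pivot_den x delta i * pivot_weight j) = (x i < x j).
Proof. by move=> dj; rewrite mulrC divfK // pmulr_rgt0 ?ltr0n // subr_gt0. Qed.

Lemma den_pivot_weight_lt0 (j : 'I_4) :
  (0 < delta j)%N -> (pivot_den x delta i * pivot_weight j < 0) = (x j < x i).
Proof. by move=> dj; rewrite mulrC divfK // pmulr_rlt0 ?ltr0n // subr_lt0. Qed.

Lemma is_barycentric_pivot (y : 'I_4 -> R) (a b c : 'I_4) :
  uniq [:: i; a; b; c] ->
  is_barycentric (x a) (y a) (x b) (y b) (x c) (y c)
    (pivot_x x delta i) (pivot_y x y delta i)
    (pivot_weight a) (pivot_weight b) (pivot_weight c).
Proof.
move=> iabc_uniq.
have sum_iabc (F : 'I_4 -> R) : F i = 0 -> \sum_j F j = F a + F b + F c.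
  by move=> Fi0; rewrite -(big_uniq_full _ _ iabc_uniq) ?card_ord //=
    !big_cons big_nil Fi0 add0r addr0 addrA.
split.
- by rewrite -sum_pivot_weight (sum_iabc pivot_weight) ?pivot_weight_self.
- by rewrite pivot_x_affine (sum_iabc (fun j => _ * x j)) ?pivot_weight_self ?mul0r.
- by rewrite pivot_y_affine (sum_iabc (fun j => _ * y j)) ?pivot_weight_self ?mul0r.
Qed.

End PivotWeights.

Theorem corollary1 (R : realFieldType) (x y : 'I_4 -> R) (delta : 'I_4 -> nat)
  (hdelta : forall j, (0 < delta j)%N)
  (hx : forall j k : 'I_4, (j <= k)%N -> x j <= x k)
  (i a b c : 'I_4)
  (hab : (a < b)%N) (hbc : (b < c)%N)
  (hai : a != i) (hbi : b != i) (hci : c != i)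
  (hden : pivot_den x delta i != 0)
  (hncol : ~ collinear (x a) (y a) (x b) (y b) (x c) (y c))
  (la lb lc : R)
  (hbar : is_barycentric (x a) (y a) (x b) (y b) (x c) (y c)
            (pivot_x x delta i) (pivot_y x y delta i) la lb lc) :
  ~ (0 < la /\ lb < 0 /\ 0 < lc) /\ ~ (la < 0 /\ 0 < lb /\ lc < 0).
Proof.
have ord_neq (u v : 'I_4) : (u < v)%N -> u != v by rewrite -val_eqE /= neq_ltn => ->.
have iabc_uniq : uniq [:: i; a; b; c].
  by rewrite /= !inE ![i == _]eq_sym (negbTE hai) (negbTE hbi) (negbTE hci)
    !(negbTE (ord_neq _ _ _)) // (ltn_trans hab).
have [-> -> ->] :=
  is_barycentric_uniq hncol hbar (is_barycentric_pivot hden y iabc_uniq).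
apply: (no_sign_alternation hden).
- by rewrite !den_pivot_weight_gt0 // => /lt_le_trans; apply; rewrite hx // ltnW.
- by rewrite !den_pivot_weight_lt0 // => /(le_lt_trans _); apply; rewrite hx // ltnW.
Qed.
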